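(* Let $\alpha>-1$. Then $\mathcal U_n^2(W_{\alpha,-1,-1})=y\,\mathcal U_{n-1}^2(W_{\alpha,1,-1})+(1-x-y)H_{n-1,2}(w_{1,\alpha})$ for $n\ge1$, and $\mathcal U_n^2(W_{-1,-1,-1})=x\,\mathcal U_{n-1}^2(W_{1,-1,-1})+y(1-x-y)H_{n-2,1}(w_{1,1})$ for $n\ge2$.
   Context: Polynomials are in $(x,y)$; $W_{a,b,c}(x,y)=x^ay^b(1-x-y)^c$ on $T^2=\{x,y\ge0,x+y\le1\}$; for $a,b,c>-1$, $\mathcal V_m^2(W_{a,b,c})$ is the space of polynomials of degree $m$ orthogonal in $L^2(W_{a,b,c},T^2)$ to all polynomials of degree $\le m-1$, and all spaces with negative index are $\{0\}$. For $a,b>-1$, $p_m^{(b,a)}(s,t)=t^{-b}(1-s-t)^{-a}\partial_t^m[t^{b+m}(1-s-t)^{a+m}]$, $H_{m,1}(w_{a,b})=\mathrm{span}\{p_m^{(b,a)}(x,y)\}$, $H_{m,2}(w_{a,b})=\mathrm{span}\{p_m^{(b,a)}(y,x)\}$, $H_{m,3}(w_{a,b})=\mathrm{span}\{p_m^{(b,a)}(1-x-y,y)\}$. For $a,b>-1$: $\mathcal U_m^2(W_{a,b,-1})=(1-x-y)\mathcal V_{m-1}^2(W_{a,b,1})+H_{m,3}(w_{a,b})$ ($m\ge0$); $\mathcal U_0^2(W_{a,-1,-1})=\mathrm{span}\{1\}$ and for $m\ge1$, $\mathcal U_m^2(W_{a,-1,-1})=y(1-x-y)\mathcal V_{m-2}^2(W_{a,1,1})+yH_{m-1,3}(w_{a,1})+(1-x-y)H_{m-1,2}(w_{1,a})$;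 for $m\ge2$, $\mathcal U_m^2(W_{-1,-1,-1})=xy(1-x-y)\mathcal V_{m-3}^2(W_{1,1,1})+xyH_{m-2,3}(w_{1,1})+x(1-x-y)H_{m-2,2}(w_{1,1})+y(1-x-y)H_{m-2,1}(w_{1,1})$. *)

From HB Require Import structures.
From mathcomp Require Import all_boot all_order all_algebra.
From mathcomp Require Import all_classical all_reals all_analysis.
Set Implicit Arguments. Unset Strict Implicit. Unset Printing Implicit Defensive.
Import Order.TTheory GRing.Theory Num.Theory.
Import numFieldNormedType.Exports.
Local Open Scope classical_set_scope.
Local Open Scope ring_scope.

Section Defs.
Variable R : realType.

Definition fun2 := R -> R -> R.

Definition polyfun_le (m : nat) (f : fun2) : Prop :=
  exists c : nat -> nat -> R, forall x y,
    f x y = \sum_(i < m.+1) \sum_(j < m.+1 | (i + j <= m)%N)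
              c i j * x ^+ i * y ^+ j.

Definition T2 : set (R * R) := [set z | 0 <= z.1 /\ 0 <= z.2 /\ z.1 + z.2 <= 1].

Definition Wt (a b c : R) (x y : R) : R :=
  x `^ a * y `^ b * (1 - x - y) `^ c.

Definition ipW (a b c : R) (p q : fun2) : R :=
  Rintegral ((@lebesgue_measure R) \x (@lebesgue_measure R))%E T2
    (fun z => p z.1 z.2 * q z.1 z.2 * Wt a b c z.1 z.2).

(* V_m^2(W_{a,b,c}) for m >= 0: polynomials of degree <= m orthogonal to all
   polynomials of degree <= m-1 (i.e. of degree <= k for every k < m) *)
Definition Vnat (a b c : R) (m : nat) : set fun2 :=
  [set p | polyfun_le m p /\
     forall (k : nat) (q : fun2), (k < m)%N -> polyfun_le k q -> ipW a b c p q = 0].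

Definition Vsp (a b c : R) (m : int) : set fun2 :=
  match m with
  | Posz n => Vnat a b c n
  | Negz _ => [set (fun _ _ => 0)]
  end.

(* p_m^{(b,a)}(s,t) = t^{-b}(1-s-t)^{-a} d_t^m [ t^{b+m} (1-s-t)^{a+m} ],
   meaningful for t > 0, 1-s-t > 0 *)
Definition pJ (b a : R) (m : nat) (s t : R) : R :=
  t `^ (- b) * (1 - s - t) `^ (- a) *
  derive1n m (fun u : R => u `^ (b + m%:R) * (1 - s - u) `^ (a + m%:R)) t.

(* span{ p_m^{(b,a)}(phi(x,y)) }: the polynomials which, for some constant c,
   coincide with c * p_m^{(b,a)}(phi(x,y)) on the open set where
   t > 0 and 1-s-t > 0, (s,t) = phi(x,y) (a polynomial is determined by its
   values on a nonempty open set). *)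
Definition Hspan (phi : R -> R -> R * R) (a b : R) (m : int) : set fun2 :=
  match m with
  | Posz n =>
    [set q | (exists k, polyfun_le k q) /\
       exists c : R, forall x y, 0 < (phi x y).2 ->
         0 < 1 - (phi x y).1 - (phi x y).2 ->
         q x y = c * pJ b a n (phi x y).1 (phi x y).2]
  | Negz _ => [set (fun _ _ => 0)]
  end.

Definition H1 (a b : R) (m : int) := Hspan (fun x y => (x, y)) a b m.
Definition H2 (a b : R) (m : int) := Hspan (fun x y => (y, x)) a b m.
Definition H3 (a b : R) (m : int) := Hspan (fun x y => (1 - x - y, y)) a b m.

Definition addS (A B : set fun2) : set fun2 :=
  [set f | exists g h, A g /\ B h /\ f = (fun x y => g x y + h x y)].
Definition mulS (r : fun2) (A : set fun2) : set fun2 :=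
  [set f | exists g, A g /\ f = (fun x y => r x y * g x y)].

Definition fx : fun2 := fun x _ => x.
Definition fy : fun2 := fun _ y => y.
Definition fz : fun2 := fun x y => 1 - x - y.
Definition fyz : fun2 := fun x y => y * (1 - x - y).
Definition fxy : fun2 := fun x y => x * y.
Definition fxz : fun2 := fun x y => x * (1 - x - y).
Definition fxyz : fun2 := fun x y => x * y * (1 - x - y).

Definition U_ab1 (a b : R) (m : nat) : set fun2 :=
  addS (mulS fz (Vsp a b 1 (m%:Z - 1))) (H3 a b m%:Z).

Definition U_a11 (a : R) (m : nat) : set fun2 :=
  match m with
  | O => [set f | exists c : R, f = (fun _ _ => c)]
  | _ => addS (addS (mulS fyz (Vsp a 1 1 (m%:Z - 2)))
                    (mulS fy (H3 a 1 (m%:Z - 1))))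
              (mulS fz (H2 1 a (m%:Z - 1)))
  end.

(* U_m^2(W_{-1,-1,-1}), defined in the source for m >= 2 *)
Definition U_111 (m : nat) : set fun2 :=
  addS (addS (addS (mulS fxyz (Vsp 1 1 1 (m%:Z - 3)))
                   (mulS fxy (H3 1 1 (m%:Z - 2))))
             (mulS fxz (H2 1 1 (m%:Z - 2))))
       (mulS fyz (H1 1 1 (m%:Z - 2))).

End Defs.

From HB Require Import structures.
From mathcomp Require Import all_boot all_order all_algebra.
From mathcomp Require Import all_classical all_reals all_analysis.
Import Order.TTheory GRing.Theory Num.Theory.
Local Open Scope classical_set_scope.
Local Open Scope ring_scope.

(* Both identities are formal: unfolding the defining decompositions, one
   distributes the outer factor over the sums of spaces, merges the products
   of weight factors (x * y (1-x-y) = x y (1-x-y), etc.), and matches the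
   shifted indices ((n-1) - 1 = n - 2). *)

Section ProductSpaces.
Variable R : realType.
Implicit Types (r s t : fun2 R) (A B : set (fun2 R)).

Lemma mulS_addS r A B : mulS r (addS A B) = addS (mulS r A) (mulS r B).
Proof.
apply/seteqP; split => f /=.
- move=> [g [[g1 [g2 [Ag1 [Bg2 ->]]]] ->]].
  exists (fun x y => r x y * g1 x y), (fun x y => r x y * g2 x y).
  split; first by exists g1.
  split; first by exists g2.
  by apply/funext => x; apply/funext => y; rewrite mulrDr.
- move=> [h1 [h2 [[g1 [Ag1 ->]] [[g2 [Bg2 ->]] ->]]]].
  exists (fun x y => g1 x y + g2 x y); split; first by exists g1, g2.
  by apply/funext => x; apply/funext => y; rewrite mulrDr.
Qed.

Lemma mulS_mulS r s t A :
  (forall x y, r x y * s x y = t x y) -> mulS r (mulS s A) = mulS t A.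
Proof.
move=> rst; apply/seteqP; split => f /=.
- move=> [g [[g1 [Ag1 ->]] ->]]; exists g1; split => //.
  by apply/funext => x; apply/funext => y; rewrite mulrA rst.
- move=> [g [Ag ->]]; exists (fun x y => s x y * g x y); split; first by exists g.
  by apply/funext => x; apply/funext => y; rewrite mulrA rst.
Qed.

End ProductSpaces.

Lemma subzSS (m : nat) (k : int) : m.+1%:Z - (k + 1) = m%:Z - k.
Proof. by rewrite -addn1 PoszD opprD addrACA subrr addr0. Qed.

Theorem corollary3p2 (R : realType) (alpha : R) (halpha : -1 < alpha) :
  (forall n : nat, (1 <= n)%N ->
     U_a11 alpha n =
     addS (mulS (@fy R) (U_ab1 alpha 1 n.-1))
          (mulS (@fz R) (H2 1 alpha (n%:Z - 1)))) /\
  (forall n : nat, (2 <= n)%N ->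
     @U_111 R n =
     addS (mulS (@fx R) (U_a11 1 n.-1))
          (mulS (@fyz R) (H1 1 1 (n%:Z - 2)))).
Proof.
split.
- case=> [//|m] _ /=.
  rewrite /U_ab1 mulS_addS (@mulS_mulS _ (@fy R) (@fz R) (@fyz R)) //.
  by rewrite -[m%:Z - 1]subzSS -[m%:Z]subr0 -(subzSS m 0).
- case=> [//|[//|m]] _ /=.
  rewrite /U_111 !mulS_addS (@mulS_mulS _ (@fx R) (@fyz R) (@fxyz R)); last first.
    by move=> x y; rewrite mulrA.
  by rewrite (@mulS_mulS _ (@fx R) (@fy R) (@fxy R)) //
    (@mulS_mulS _ (@fx R) (@fz R) (@fxz R)).
Qed.
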